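(* Let $\beta\in\mathcal{B}_3$ and write $\rho_3(\beta)=\begin{pmatrix}\mathcal{R}(t)&\mathcal{V}(t)\\\mathcal{S}(t)&\mathcal{U}(t)\end{pmatrix}$. If $\mathcal{S}(t)\equiv0$ (as a Laurent polynomial), then $\beta$ belongs to the subgroup of $\mathcal{B}_3$ generated by $\sigma_1$ and $(\sigma_1\sigma_2)^3$.
   Context: $\mathcal{B}_3$ is the braid group with generators $\sigma_1,\sigma_2$ and relation $\sigma_1\sigma_2\sigma_1=\sigma_2\sigma_1\sigma_2$. The reduced Burau representation $\rho_3:\mathcal{B}_3\to\mathrm{GL}(2,\mathbb{Z}[t,t^{-1}])$ is defined by $\sigma_1\mapsto\begin{pmatrix}-t&1\\0&1\end{pmatrix}$, $\sigma_2\mapsto\begin{pmatrix}1&0\\t&-t\end{pmatrix}$, with $t$ a formal parameter. *)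

From HB Require Import structures.
From mathcomp Require Import all_boot all_order all_algebra fraction.
Set Implicit Arguments. Unset Strict Implicit. Unset Printing Implicit Defensive.
Import GRing.Theory.
Local Open Scope ring_scope.

Inductive gen := s1 | s2.

(* a letter (g, true) is sigma_g, (g, false) is sigma_g^{-1} *)
Definition letter := (gen * bool)%type.
Definition word := seq letter.

Definition inv_word (w : word) : word := rev (map (fun l => (l.1, ~~ l.2)) w).

(* congruence on words generated by free cancellation and the braid relation;
   word / braid_equiv is B_3 = < s1, s2 | s1 s2 s1 = s2 s1 s2 > *)
Inductive braid_equiv : word -> word -> Prop :=
| be_refl w : braid_equiv w w
| be_sym u v : braid_equiv u v -> braid_equiv v u
| be_trans u v w : braid_equiv u v -> braid_equiv v w -> braid_equiv u w
| be_cancel u v (g : gen) (b : bool) :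
    braid_equiv (u ++ [:: (g, b); (g, ~~ b)] ++ v) (u ++ v)
| be_braid u v :
    braid_equiv (u ++ [:: (s1, true); (s2, true); (s1, true)] ++ v)
                (u ++ [:: (s2, true); (s1, true); (s2, true)] ++ v).

Definition delta2 : word :=
  [:: (s1, true); (s2, true); (s1, true); (s2, true); (s1, true); (s2, true)].

(* generators of the subgroup <sigma1, (sigma1 sigma2)^3> and their inverses:
   (true, e) = sigma1^{+-1}, (false, e) = ((sigma1 sigma2)^3)^{+-1} *)
Definition sub_gen_word (x : bool * bool) : word :=
  match x with
  | (true, true) => [:: (s1, true)]
  | (true, false) => [:: (s1, false)]
  | (false, true) => delta2
  | (false, false) => inv_word delta2
  end.

Definition in_sub_s1_delta2 (w : word) : Prop :=
  exists l : seq (bool * bool), braid_equiv w (flatten (map sub_gen_word l)).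

(* Z[t,t^-1] is embedded in its fraction field Q(t) = Frac(Z[t]) *)
Definition Lau := {fraction {poly int}}.
Definition tL : Lau := tofrac ('X : {poly int}).

Definition mx2 (a b c d : Lau) : 'M[Lau]_2 :=
  \matrix_(i < 2, j < 2)
    if (i == 0 :> nat) then (if (j == 0 :> nat) then a else b)
    else (if (j == 0 :> nat) then c else d).

Definition burau_gen (g : gen) : 'M[Lau]_2 :=
  match g with
  | s1 => mx2 (- tL) 1 0 1
  | s2 => mx2 1 0 tL (- tL)
  end.

Definition burau_letter (l : letter) : 'M[Lau]_2 :=
  if l.2 then burau_gen l.1 else invmx (burau_gen l.1).

Definition rho3 (w : word) : 'M[Lau]_2 :=
  foldr (fun l M => burau_letter l *m M) 1%:M w.

Definition burauS (w : word) : Lau := rho3 w ord_max ord0.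

(* Specialising t to -1 turns rho3 into the map B_3 -> SL_2(Z) with sigma1 |-> [[1, 1], [0, 1]]
   and sigma2 |-> [[1, 0], [-1, 1]]; clearing the denominators (-t)^k of inverse letters shows
   that S = 0 forces S(-1) = 0.
   With x = sigma1 sigma2 sigma1 and y = sigma1 sigma2 one has x^2 = y^3 = Delta^2 central, so
   every braid is y^c (x y^e_1) ... (x y^e_k) x^f Delta^(2m) with c < 3, e_i in {1, 2}, f < 2.
   Up to the sign coming from Delta^2 |-> -1, the blocks x y and x y^2 map to [[1, -1], [0, 1]]
   and [[1, 0], [-1, 1]], whose products have positive diagonal and nonpositive off-diagonal
   entries, an off-diagonal entry vanishing only if all blocks are of one kind. Checking the six
   pairs (c, f) then leaves only (x y)^k Delta^(2m) = (sigma1^-1 Delta^2)^k Delta^(2m) and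
   y^2 (x y^2)^k x Delta^(2m) = (sigma1 Delta^2)^(k+1) Delta^(2m). *)

From mathcomp Require Import all_boot all_order all_algebra fraction.
From mathcomp Require Import ring zify.
From Stdlib Require Import Setoid Morphisms Lia.
Set Implicit Arguments. Unset Strict Implicit. Unset Printing Implicit Defensive.

Local Notation "u =b v" := (braid_equiv u v) (at level 70).
Local Notation sig1 := (s1, true).
Local Notation sig2 := (s2, true).
Local Notation sig1i := (s1, false).

Lemma braid_equiv_ctx p q u v : u =b v -> p ++ u ++ q =b p ++ v ++ q.
Proof.
elim=> {u v} [w|u v _ IH|u v w _ IH1 _ IH2|u v g b|u v].
- exact: be_refl.
- exact: be_sym IH.
- exact: be_trans IH1 IH2.
- by have := be_cancel (p ++ u) (v ++ q) g b; rewrite -!catA.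
- by have := be_braid (p ++ u) (v ++ q); rewrite -!catA.
Qed.

#[local] Hint Resolve be_refl : core.

#[local] Instance braid_equiv_Equivalence : Equivalence braid_equiv.
Proof. split; [exact: be_refl | exact: be_sym | exact: be_trans]. Qed.

#[local] Instance cat_braid_Proper :
  Proper (braid_equiv ==> braid_equiv ==> braid_equiv) (@cat letter).
Proof.
move=> u u' uu' v v' vv'; transitivity (u' ++ v); first exact: (braid_equiv_ctx [::] v uu').
by have := braid_equiv_ctx u' [::] vv'; rewrite !cats0.
Qed.

Lemma inv_word_cat u v : inv_word (u ++ v) = inv_word v ++ inv_word u.
Proof. by rewrite /inv_word map_cat rev_cat. Qed.

Lemma cat_wordV u : u ++ inv_word u =b [::].
Proof.
elim: u => [|[g b] u IH] //.
rewrite -cat1s inv_word_cat !catA -(catA _ u) IH.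
exact: (be_cancel [::] [::] g b).
Qed.

Lemma cat_Vword u : inv_word u ++ u =b [::].
Proof.
elim/last_ind: u => [|u [g b] IH] //.
rewrite -cats1 inv_word_cat -catA (catA (inv_word u)) IH /=.
by have := be_cancel [::] [::] g (~~ b); rewrite negbK.
Qed.

Lemma commute_letterV g b w :
  [:: (g, b)] ++ w =b w ++ [:: (g, b)] -> [:: (g, ~~ b)] ++ w =b w ++ [:: (g, ~~ b)].
Proof.
move=> w_comm; transitivity ([:: (g, ~~ b)] ++ (w ++ [:: (g, b)]) ++ [:: (g, ~~ b)]).
  by symmetry; have := be_cancel ([:: (g, ~~ b)] ++ w) [::] g b; rewrite -!catA !cats0; apply.
rewrite -w_comm.
by have := be_cancel [::] (w ++ [:: (g, ~~ b)]) g (~~ b); rewrite negbK.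
Qed.

Lemma delta2_commute l : [:: l] ++ delta2 =b delta2 ++ [:: l].
Proof.
have delta2_rev : [:: sig2; sig1; sig2; sig1; sig2; sig1] =b delta2.
  transitivity [:: sig1; sig2; sig1; sig1; sig2; sig1].
    exact: be_sym (be_braid [::] [:: sig1; sig2; sig1]).
  exact: (be_braid [:: sig1; sig2; sig1] [::]).
have comm1 : [:: sig1] ++ delta2 =b delta2 ++ [:: sig1].
  by rewrite -{1}delta2_rev.
have comm2 : [:: sig2] ++ delta2 =b delta2 ++ [:: sig2].
  by rewrite -{2}delta2_rev.
case: l => [[] []] //.
- exact: (commute_letterV comm1).
- exact: (commute_letterV comm2).
Qed.

Lemma delta2_central u : delta2 ++ u =b u ++ delta2.
Proof.
elim: u => [|l u IH]; first by rewrite cats0.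
by rewrite -cat1s catA -delta2_commute -catA IH.
Qed.

Lemma delta2V_central u : inv_word delta2 ++ u =b u ++ inv_word delta2.
Proof.
transitivity (inv_word delta2 ++ (u ++ delta2) ++ inv_word delta2).
  by rewrite -catA cat_wordV cats0.
by rewrite -delta2_central !catA cat_Vword.
Qed.

Definition xw : word := [:: sig1; sig2; sig1].
Definition yw : word := [:: sig1; sig2].

Lemma xw2 : xw ++ xw =b delta2.
Proof. exact: (be_braid [:: sig1; sig2; sig1] [::]). Qed.

Lemma sig1_delta2 : [:: sig1] ++ delta2 =b yw ++ yw ++ xw.
Proof. by rewrite delta2_commute. Qed.

Lemma sig1V_delta2 : [:: sig1i] ++ delta2 =b xw ++ yw.
Proof.
rewrite delta2_commute -xw2.
exact: (be_cancel [:: sig1; sig2; sig1; sig1; sig2] [::] s1 true).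
Qed.

Inductive ypow := Y0 | Y1 | Y2.

Definition ypow_word c : word :=
  match c with Y0 => [::] | Y1 => yw | Y2 => yw ++ yw end.
Definition block (b : bool) : word := xw ++ (if b then yw else yw ++ yw).
Definition blocks_word (bl : seq bool) : word := flatten (map block bl).
Definition delta2s_word (ds : seq bool) : word :=
  flatten (map (fun b => sub_gen_word (false, b)) ds).

(* [NForm c bl e ds] is y^c B_1 ... B_k x^e D_1 ... D_m, where B_i is x y or x y^2 according to
   [bl_i] and D_j is Delta^2 or Delta^-2 according to [ds_j]. *)
Record nform := NForm { nf_y : ypow; nf_blocks : seq bool; nf_x : bool; nf_delta2s : seq bool }.

Definition nf_word (n : nform) : word :=
  let: NForm c bl e ds := n in
  ypow_word c ++ blocks_word bl ++ (if e then xw else [::]) ++ delta2s_word ds.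

Definition nf_delta2 (b : bool) (n : nform) : nform :=
  let: NForm c bl e ds := n in NForm c bl e (rcons ds b).

Lemma nf_word_delta2 b n : nf_word n ++ sub_gen_word (false, b) = nf_word (nf_delta2 b n).
Proof.
case: n => c bl e ds.
by rewrite /= /delta2s_word -cats1 map_cat flatten_cat /= cats0 !catA.
Qed.

Definition nf_mul_y (n : nform) : nform :=
  let: NForm c bl e ds := n in
  match c with
  | Y0 => NForm Y1 bl e ds
  | Y1 => NForm Y2 bl e ds
  | Y2 => nf_delta2 true (NForm Y0 bl e ds)
  end.

Lemma nf_mul_yP n : yw ++ nf_word n =b nf_word (nf_mul_y n).
Proof.
case: n => [[] bl e ds] //.
rewrite -nf_word_delta2 -delta2_central.
by rewrite /= !catA.
Qed.

Definition nf_mul_x (n : nform) : nform :=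
  let: NForm c bl e ds := n in
  match c, bl, e with
  | Y1, _, _ => NForm Y0 (true :: bl) e ds
  | Y2, _, _ => NForm Y0 (false :: bl) e ds
  | Y0, b :: bl', _ => nf_delta2 true (NForm (if b then Y1 else Y2) bl' e ds)
  | Y0, [::], true => nf_delta2 true (NForm Y0 [::] false ds)
  | Y0, [::], false => NForm Y0 [::] true ds
  end.

Lemma nf_mul_xP n : xw ++ nf_word n =b nf_word (nf_mul_x n).
Proof.
case: n => [[] [|b bl] e ds] //; rewrite /nf_mul_x.
- case: e => //; rewrite -nf_word_delta2.
  rewrite -[nf_word (NForm Y0 [::] true ds)]/(xw ++ nf_word (NForm Y0 [::] false ds)).
  by rewrite catA xw2 delta2_central.
- rewrite -nf_word_delta2.
  have -> : nf_word (NForm Y0 (b :: bl) e ds) =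
            xw ++ nf_word (NForm (if b then Y1 else Y2) bl e ds) by case: b.
  by rewrite catA xw2 delta2_central.
Qed.

Definition xy_word (ms : seq bool) : word := flatten (map (fun m : bool => if m then xw else yw) ms).
Definition nf_mul_xy (ms : seq bool) (n : nform) : nform :=
  foldr (fun m : bool => if m then nf_mul_x else nf_mul_y) n ms.

Lemma nf_mul_xyP ms n : xy_word ms ++ nf_word n =b nf_word (nf_mul_xy ms n).
Proof.
elim: ms => [|m ms IH] //=.
by rewrite -catA IH; case: m; [exact: nf_mul_xP | exact: nf_mul_yP].
Qed.

Lemma letter_delta2_xy l : exists ms, [:: l] ++ delta2 =b xy_word ms.
Proof.
case: l => [[] []].
- by exists [:: false; false; true]; rewrite sig1_delta2.
- by exists [:: true; false]; rewrite sig1V_delta2.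
- by exists [:: true; false; false]; rewrite delta2_commute -xw2.
- exists [:: false; true]; rewrite delta2_commute.
  exact: (be_cancel [:: sig1; sig2; sig1; sig2; sig1] [::] s2 true).
Qed.

Lemma nf_exists w : exists n, w =b nf_word n.
Proof.
elim: w => [|l w [n IH]]; first by exists (NForm Y0 [::] false [::]).
have [ms l_delta2] := letter_delta2_xy l.
exists (nf_delta2 false (nf_mul_xy ms n)).
rewrite -nf_word_delta2 -nf_mul_xyP -l_delta2 -IH.
rewrite -[sub_gen_word _]/(inv_word delta2) -!catA -(delta2V_central w).
by rewrite (catA delta2) cat_wordV.
Qed.

Lemma in_sub_equiv u v : u =b v -> in_sub_s1_delta2 v -> in_sub_s1_delta2 u.
Proof. by move=> uv [l v_l]; exists l; rewrite uv. Qed.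

Lemma in_sub_cat u v :
  in_sub_s1_delta2 u -> in_sub_s1_delta2 v -> in_sub_s1_delta2 (u ++ v).
Proof.
by move=> [lu u_lu] [lv v_lv]; exists (lu ++ lv); rewrite map_cat flatten_cat u_lu v_lv.
Qed.

Lemma in_sub_gen x : in_sub_s1_delta2 (sub_gen_word x).
Proof. by exists [:: x]; rewrite /= cats0. Qed.

Lemma in_sub_delta2s ds : in_sub_s1_delta2 (delta2s_word ds).
Proof.
elim: ds => [|b ds IH]; first by exists [::].
exact: (in_sub_cat (in_sub_gen (false, b)) IH).
Qed.

Lemma in_sub_nf_upper bl ds :
  all id bl -> in_sub_s1_delta2 (nf_word (NForm Y0 bl false ds)).
Proof.
move=> bl_true; rewrite /nf_word /=; apply: in_sub_cat; last exact: in_sub_delta2s.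
elim: bl bl_true => [_|[] bl IH //= /IH bl_sub]; first by exists [::].
apply: (in_sub_equiv (v := ([:: sig1i] ++ delta2) ++ blocks_word bl)).
  by rewrite sig1V_delta2.
by apply: in_sub_cat bl_sub; apply: in_sub_cat (in_sub_gen (true, false)) (in_sub_gen (false, true)).
Qed.

Lemma in_sub_nf_lower bl ds :
  all negb bl -> in_sub_s1_delta2 (nf_word (NForm Y2 bl true ds)).
Proof.
move=> bl_false; rewrite /nf_word !catA; apply: in_sub_cat; last exact: in_sub_delta2s.
rewrite -!catA; elim: bl bl_false => [_|[] bl IH //= /IH bl_sub].
  apply: (in_sub_equiv (v := [:: sig1] ++ delta2)); first by rewrite sig1_delta2.
  exact: (in_sub_cat (in_sub_gen (true, true)) (in_sub_gen (false, true))).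
apply: (in_sub_equiv (v := ([:: sig1] ++ delta2) ++ (yw ++ yw ++ blocks_word bl ++ xw))).
  by rewrite sig1_delta2.
by apply: in_sub_cat bl_sub; apply: in_sub_cat (in_sub_gen (true, true)) (in_sub_gen (false, true)).
Qed.

Import GRing.Theory.
Local Open Scope ring_scope.

(* [(a, b, c, d)] stands for the matrix [[a, b], [c, d]]; with tuples, products of concrete
   integer matrices compute by conversion. *)
Definition mat22 (R : Type) := (R * R * R * R)%type.

Section Mat22.
Variable R : comPzRingType.

Definition mul22 (M N : mat22 R) : mat22 R :=
  let: (a, b, c, d) := M in let: (a', b', c', d') := N in
  (a * a' + b * c', a * b' + b * d', c * a' + d * c', c * b' + d * d').
Definition one22 : mat22 R := (1, 0, 0, 1).
Definition scale22 (k : R) (M : mat22 R) : mat22 R :=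
  let: (a, b, c, d) := M in (k * a, k * b, k * c, k * d).
Definition lower_left (M : mat22 R) : R := M.1.2.

Lemma mul22A M N P : mul22 M (mul22 N P) = mul22 (mul22 M N) P.
Proof.
case: M => [[[a b] c] d]; case: N => [[[a' b'] c'] d']; case: P => [[[x y] z] w] /=.
congr (_, _, _, _); ring.
Qed.

Lemma mul1_22 M : mul22 one22 M = M.
Proof. case: M => [[[a b] c] d] /=; congr (_, _, _, _); ring. Qed.

Lemma mul22_1 M : mul22 M one22 = M.
Proof. case: M => [[[a b] c] d] /=; congr (_, _, _, _); ring. Qed.

Lemma mul22Zl k M N : mul22 (scale22 k M) N = scale22 k (mul22 M N).
Proof.
case: M => [[[a b] c] d]; case: N => [[[a' b'] c'] d'] /=.
congr (_, _, _, _); ring.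
Qed.

Lemma mul22Zr k M N : mul22 M (scale22 k N) = scale22 k (mul22 M N).
Proof.
case: M => [[[a b] c] d]; case: N => [[[a' b'] c'] d'] /=.
congr (_, _, _, _); ring.
Qed.

Lemma scale22A k l M : scale22 k (scale22 l M) = scale22 (k * l) M.
Proof. case: M => [[[a b] c] d] /=; congr (_, _, _, _); ring. Qed.

Lemma lower_leftZ k M : lower_left (scale22 k M) = k * lower_left M.
Proof. by case: M => [[[a b] c] d]. Qed.

End Mat22.

Definition map22 (R S : Type) (f : R -> S) (M : mat22 R) : mat22 S :=
  let: (a, b, c, d) := M in (f a, f b, f c, f d).

Section Map22.
Variables (R S : comPzRingType) (f : {rmorphism R -> S}).

Lemma map22M M N : map22 f (mul22 M N) = mul22 (map22 f M) (map22 f N).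
Proof.
case: M => [[[a b] c] d]; case: N => [[[a' b'] c'] d'].
by rewrite /= !rmorphD !rmorphM.
Qed.

Lemma map22_1 : map22 f (one22 R) = one22 S.
Proof. by rewrite /= rmorph0 rmorph1. Qed.

Lemma lower_left_map22 M : lower_left (map22 f M) = f (lower_left M).
Proof. by case: M => [[[a b] c] d]. Qed.

End Map22.

(* rho3 at t = -1. *)
Definition sl2_letter (l : letter) : mat22 int :=
  match l with
  | (s1, true) => (1, 1, 0, 1)
  | (s2, true) => (1, 0, -1, 1)
  | (s1, false) => (1, -1, 0, 1)
  | (s2, false) => (1, 0, 1, 1)
  end.

Definition sl2 (w : word) : mat22 int := foldr (fun l => mul22 (sl2_letter l)) (one22 _) w.

Lemma sl2_cat u v : sl2 (u ++ v) = mul22 (sl2 u) (sl2 v).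
Proof.
elim: u => [|l u IH]; first by rewrite mul1_22.
by rewrite /= IH mul22A.
Qed.

Lemma sl2_braid_equiv u v : u =b v -> sl2 u = sl2 v.
Proof.
elim=> {u v} [w|u v _ ->|u v w _ -> _ ->|u v g b|u v] //; rewrite !sl2_cat.
  have -> : sl2 [:: (g, b); (g, ~~ b)] = one22 _ by case: g; case: b.
  by rewrite mul1_22.
by congr (mul22 _ (mul22 _ _)).
Qed.

Lemma sl2_delta2s ds : sl2 (delta2s_word ds) = scale22 ((-1) ^+ size ds) (one22 _).
Proof.
elim: ds => [|b ds IH]; first by rewrite expr0 /= !mulr1 mulr0.
rewrite -[delta2s_word _]/(sub_gen_word (false, b) ++ delta2s_word ds) sl2_cat IH.
have -> : sl2 (sub_gen_word (false, b)) = scale22 (-1) (one22 _) by case: b.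
by rewrite mul22Zl mul1_22 scale22A exprS.
Qed.

Definition pos_block (b : bool) : mat22 int := if b then (1, -1, 0, 1) else (1, 0, -1, 1).
Definition pos_blocks (bl : seq bool) : mat22 int :=
  foldr (fun b => mul22 (pos_block b)) (one22 _) bl.

Lemma sl2_blocks bl : sl2 (blocks_word bl) = scale22 ((-1) ^+ size bl) (pos_blocks bl).
Proof.
elim: bl => [|b bl IH]; first by rewrite expr0 /= !mulr1 mulr0.
rewrite -[blocks_word _]/(block b ++ blocks_word bl) sl2_cat IH.
have -> : sl2 (block b) = scale22 (-1) (pos_block b) by case: b.
by rewrite mul22Zl mul22Zr scale22A exprS.
Qed.

Lemma pos_blocks_sign bl : let: (p, q, r, s) := pos_blocks bl in
  [/\ 1 <= p, 1 <= s, q <= 0 & r <= 0] /\ (r = 0 -> all id bl) /\ (q = 0 -> all negb bl).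
Proof.
elim: bl => [|b bl] /=; first by split; [split | split].
case: (pos_blocks bl) => [[[p q] r] s] [[p1 s1 q0 r0] [r_bl q_bl]].
by case: b => /=; (split; [split | split]) => //; lia.
Qed.

Lemma lower_left_y_pos_x c e (p q r s : int) :
  [/\ 1 <= p, 1 <= s, q <= 0 & r <= 0] ->
  lower_left (mul22 (sl2 (ypow_word c)) (mul22 (p, q, r, s) (sl2 (if e then xw else [::])))) = 0 ->
  (c = Y0 /\ e = false /\ r = 0) \/ (c = Y2 /\ e = true /\ q = 0).
Proof.
move=> [p1 s1 q0 r0]; rewrite /lower_left; case: c; case: e => /= ll0.
all: first [left; do !split; lia | right; do !split; lia | exfalso; lia].
Qed.

Lemma nf_lower_left_eq0 n : lower_left (sl2 (nf_word n)) = 0 ->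
  (nf_y n = Y0 /\ nf_x n = false /\ all id (nf_blocks n)) \/
  (nf_y n = Y2 /\ nf_x n = true /\ all negb (nf_blocks n)).
Proof.
case: n => c bl e ds; rewrite [nf_word _]/= !sl2_cat sl2_blocks sl2_delta2s.
rewrite !(mul22Zl, mul22Zr) mul22_1 scale22A lower_leftZ => /eqP.
rewrite mulf_eq0 -exprD expf_eq0 oppr_eq0 oner_eq0 andbF /= => /eqP.
have := pos_blocks_sign bl.
case: (pos_blocks bl) => [[[p q] r] s] [sign_bl [r_bl q_bl]].
by move/(lower_left_y_pos_x sign_bl) => [[-> [-> /r_bl]] | [-> [-> /q_bl]]]; [left | right].
Qed.

Lemma mx2_lower_left a b c d : mx2 a b c d ord_max ord0 = c.
Proof. by rewrite mxE. Qed.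

Lemma mx2_mul a b c d a' b' c' d' :
  mx2 a b c d *m mx2 a' b' c' d' =
  mx2 (a * a' + b * c') (a * b' + b * d') (c * a' + d * c') (c * b' + d * d').
Proof.
apply/matrixP => i j; rewrite !mxE !big_ord_recr big_ord0 /= !mxE.
by case: i => [[|[|//]] ?]; case: j => [[|[|//]] ?]; rewrite /= add0r.
Qed.

Lemma mx2_scalar k : mx2 k 0 0 k = k%:M.
Proof.
apply/matrixP => i j; rewrite !mxE.
by case: i => [[|[|//]] ?]; case: j => [[|[|//]] ?].
Qed.

Lemma invmx_scaled (F : fieldType) n (A B : 'M[F]_n) k :
  k != 0 -> A *m B = k%:M -> invmx A = k^-1 *: B.
Proof.
move=> k0 AB; have AB1 : A *m (k^-1 *: B) = 1%:M.
  by rewrite -scalemxAr AB -scalemx1 scalerA mulVf // scale1r.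
have [A_unit _] := mulmx1_unit AB1.
by rewrite -[RHS](mulKmx A_unit) AB1 mulmx1.
Qed.

Lemma tL_neq0 : tL != 0.
Proof. by rewrite tofrac_eq0 polyX_eq0. Qed.

Definition frac_mx (Q : mat22 {poly int}) : 'M[Lau]_2 :=
  let: (a, b, c, d) := Q in mx2 (tofrac a) (tofrac b) (tofrac c) (tofrac d).

Lemma frac_mxM Q Q' : frac_mx (mul22 Q Q') = frac_mx Q *m frac_mx Q'.
Proof.
case: Q => [[[a b] c] d]; case: Q' => [[[a' b'] c'] d'].
by rewrite /= mx2_mul !tofracD !tofracM.
Qed.

Lemma frac_mx1 : frac_mx (one22 _) = 1%:M.
Proof. by rewrite /= tofrac1 tofrac0 mx2_scalar. Qed.

(* For an inverse letter, the Burau matrix multiplied by -t. *)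
Definition burau_poly_letter (l : letter) : mat22 {poly int} :=
  match l with
  | (s1, true) => (- 'X, 1, 0, 1)
  | (s2, true) => (1, 0, 'X, - 'X)
  | (s1, false) => (1, -1, 0, - 'X)
  | (s2, false) => (- 'X, 0, - 'X, 1)
  end.

Definition burau_poly (w : word) : mat22 {poly int} :=
  foldr (fun l => mul22 (burau_poly_letter l)) (one22 _) w.

Lemma burau_letterE l :
  burau_letter l = (- tL)^-1 ^+ (~~ l.2) *: frac_mx (burau_poly_letter l).
Proof.
have tN0 : - tL != 0 by rewrite oppr_eq0 tL_neq0.
case: l => [[] []];
  cbv beta iota zeta delta [burau_letter burau_gen burau_poly_letter frac_mx fst snd negb nat_of_bool];
  rewrite ?tofracN ?tofrac1 ?tofrac0 -/tL ?expr0 ?scale1r // expr1.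
all: apply: invmx_scaled tN0 _; rewrite mx2_mul -mx2_scalar.
all: by rewrite !(mulr1, mul1r, mulr0, mul0r, addr0, add0r, mulrN, mulNr, opprK, subrr, addNr).
Qed.

Definition n_inv (w : word) : nat := count (fun l : letter => ~~ l.2) w.

Lemma rho3E w : rho3 w = (- tL)^-1 ^+ n_inv w *: frac_mx (burau_poly w).
Proof.
elim: w => [|l w IH]; first by rewrite expr0 scale1r frac_mx1.
rewrite [rho3 _]/= IH burau_letterE -scalemxAl -scalemxAr scalerA -exprD.
by rewrite -frac_mxM.
Qed.

Lemma burauS_eq0 w : burauS w = 0 -> lower_left (burau_poly w) = 0.
Proof.
rewrite /burauS rho3E; case: (burau_poly w) => [[[a b] c] d].
rewrite mxE mx2_lower_left => /eqP.
rewrite mulf_eq0 expf_eq0 invr_eq0 oppr_eq0 (negbTE tL_neq0) andbF /=.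
by rewrite tofrac_eq0 => /eqP.
Qed.

Lemma burau_poly_at_m1 w : map22 (horner_eval (-1)) (burau_poly w) = sl2 w.
Proof.
elim: w => [|l w IH]; first exact: map22_1.
rewrite [burau_poly _]/= map22M IH; congr mul22.
by case: l => [[] []]; rewrite /= !horner_evalE !hornerE.
Qed.

Theorem lemma1 (beta : word) :
  burauS beta = 0%R -> in_sub_s1_delta2 beta.
Proof.
move=> /burauS_eq0 S0; have [[c bl e ds] beta_n] := nf_exists beta.
have : lower_left (sl2 (nf_word (NForm c bl e ds))) = 0.
  by rewrite -(sl2_braid_equiv beta_n) -burau_poly_at_m1 lower_left_map22 S0 rmorph0.
move=> /nf_lower_left_eq0 /= [[c_Y0 [e_false bl_true]] | [c_Y2 [e_true bl_false]]]; subst c e.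
- exact: in_sub_equiv beta_n (in_sub_nf_upper ds bl_true).
- exact: in_sub_equiv beta_n (in_sub_nf_lower ds bl_false).
Qed.
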